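(* Let $X$ be an $X$-set parameter and let $G$ be a graph with no isolated vertices. Then the automorphism group of $\mathscr{X}^{\rm TAR}(G)$ is generated by $\{\nu_R : R\subseteq V(G)\text{ is }X\text{-irrelevant}\}\cup M_X(G)$, where each $\psi\in M_X(G)$ is regarded as the map $S\mapsto\psi(S)=\{\psi(s):s\in S\}$ on $X$-sets.
   Context: All graphs are simple, finite, with nonempty vertex set. An $X$-set parameter is a graph parameter $X(G)$ defined as the minimum cardinality of an $X$-set of $G$, where the $X$-sets of each graph are subsets of its vertex set determined by some property satisfying: (1) supersets (within $V(G)$) of $X$-sets are $X$-sets; (2) the empty set is never an $X$-set; (3) an $X$-set of a disconnected graph is the union of an $X$-set of each component; (4) if $G$ has no isolated vertices, every set of $|V(G)|-1$ vertices is an $X$-set. The $X$-TAR graph $\mathscr{X}^{\rm TAR}(G)$ has as vertices all $X$-sets of $G$, with $S_1,S_2$ adjacent iff $|S_1\ominus S_2|=1$ (symmetric difference). A vertex $v$ is $X$-irrelevant if $v\notin S$ for every minimal $X$-set $S$ of $G$; a set is $X$-irrelevant if all its vertices are. For $R\subseteq V(G)$, $\nu_R(S)=S\ominus R$. $M_X(G)$ is the set of bijections $\psi:V(G)\to V(G)$ that send minimal $X$-sets of $G$ to minimal $X$-sets of $G$ of the same size. *)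

From mathcomp Require Import all_boot all_fingroup.
Set Implicit Arguments. Unset Strict Implicit. Unset Printing Implicit Defensive.

Definition simple_graph (T : finType) (e : rel T) : Prop :=
  0 < #|T| /\ irreflexive e /\ symmetric e.

Definition no_isolated (T : finType) (e : rel T) : Prop :=
  forall x : T, exists y : T, e x y.

Definition disconnected (T : finType) (e : rel T) : Prop :=
  exists x y : T, ~~ connect e x y.

Definition is_component (T : finType) (e : rel T) (C : {set T}) : Prop :=
  exists x : T, C = [set y | connect e x y].

Definition ind_rel (T : finType) (e : rel T) (C : {set T}) :
  rel {x : T | x \in C} := fun u v => e (val u) (val v).

Arguments ind_rel {T} e C.
Definition trace_set (T : finType) (C : {set T}) (S : {set T}) :
  {set {x : T | x \in C}} := [set u : {x : T | x \in C} | val u \in S].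
Arguments trace_set {T} C S.

Definition graph_iso (T1 T2 : finType) (e1 : rel T1) (e2 : rel T2)
  (f : T1 -> T2) : Prop :=
  bijective f /\ forall x y, e2 (f x) (f y) = e1 x y.

(* A family of vertex-subset properties, one for each graph:
   X T e S  <=> S is an X-set of the graph (T, e). *)
Definition Xfamily := forall T : finType, rel T -> {set T} -> bool.

(* X-set parameter axioms (1)-(4), plus invariance under graph
   isomorphism (X is a graph parameter). *)
Definition Xset_parameter (X : Xfamily) : Prop :=
  (forall (T1 T2 : finType) (e1 : rel T1) (e2 : rel T2) (f : T1 -> T2),
      simple_graph e1 -> simple_graph e2 -> graph_iso e1 e2 f ->
      forall S : {set T1}, X T2 e2 (f @: S) = X T1 e1 S) /\
  (forall (T : finType) (e : rel T), simple_graph e ->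
      forall S S' : {set T}, S \subset S' -> X T e S -> X T e S') /\
  (forall (T : finType) (e : rel T), simple_graph e -> ~~ X T e set0) /\
  (forall (T : finType) (e : rel T), simple_graph e -> disconnected e ->
      forall S : {set T},
        X T e S <->
        (forall C : {set T}, is_component e C ->
           X _ (ind_rel e C) (trace_set C S))) /\
  (forall (T : finType) (e : rel T), simple_graph e -> no_isolated e ->
      forall S : {set T}, #|S| = #|T| - 1 -> X T e S).

Definition minimal_Xset (X : Xfamily) (T : finType) (e : rel T) (S : {set T}) : bool :=
  minset (X T e) S.

Definition X_irrelevant (X : Xfamily) (T : finType) (e : rel T) (R : {set T}) : bool :=
  [forall v in R, forall S : {set T}, minimal_Xset X e S ==> (v \notin S)].

Definition symdiff (T : finType) (A B : {set T}) : {set T} := (A :\: B) :|: (B :\: A).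

Definition M_X (X : Xfamily) (T : finType) (e : rel T) (psi : {perm T}) : bool :=
  [forall S : {set T}, minimal_Xset X e S ==>
    (minimal_Xset X e (psi @: S) && (#|psi @: S| == #|S|))].

Notation Xsets X T e := {S : {set T} | X T e S}.

Definition TAR_adj (X : Xfamily) (T : finType) (e : rel T) : rel (Xsets X T e) :=
  fun S1 S2 => #|symdiff (val S1) (val S2)| == 1.

Definition TAR_Aut (X : Xfamily) (T : finType) (e : rel T) : {set {perm Xsets X T e}} :=
  [set p : {perm Xsets X T e} |
    [forall S1, forall S2, TAR_adj (p S1) (p S2) == TAR_adj S1 S2]].

Definition acts_as_nu (X : Xfamily) (T : finType) (e : rel T)
  (R : {set T}) (p : {perm Xsets X T e}) : bool :=
  [forall S, val (p S) == symdiff (val S) R].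

Definition acts_as_psi (X : Xfamily) (T : finType) (e : rel T)
  (psi : {perm T}) (p : {perm Xsets X T e}) : bool :=
  [forall S, val (p S) == psi @: val S].

Definition TAR_gens (X : Xfamily) (T : finType) (e : rel T) : {set {perm Xsets X T e}} :=
  [set p : {perm Xsets X T e} |
    [exists R : {set T}, X_irrelevant X e R && acts_as_nu R p] ||
    [exists psi : {perm T}, M_X X e psi && acts_as_psi psi p]].

From mathcomp Require Import all_boot all_fingroup.
Set Implicit Arguments. Unset Strict Implicit. Unset Printing Implicit Defensive.

(* Write S + x for S with x flipped and S + R for symmetric difference.
   An automorphism phi of the TAR graph sends the edge {S, S + x} to an edge
   {phi S, phi S + y}.  In a 4-cycle S, S + x, S + j, S + x + j opposite
   edges carry the same label, and since X-sets are closed upwards every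
   edge with label x is linked to the edge {V - x, V} by such squares; so
   y = pi x depends on x only, and pi is a permutation of V.  Walking down
   from V then gives phi S = pi(S) + R with R the complement of phi(V).
   Surjectivity of phi forces R to miss every minimal X-set, after which
   S |-> pi(S) preserves X-sets in both directions, so pi is in M_X(G) and
   phi = nu_R o pi.  Conversely nu_R and the maps S |-> psi(S) preserve the
   size of symmetric differences, hence adjacency. *)

Section SymmetricDifference.
Variable T : finType.
Implicit Types (A B R S : {set T}) (x y : T).

Lemma in_symdiff A B t : (t \in symdiff A B) = (t \in A) (+) (t \in B).
Proof. by rewrite /symdiff !inE; case: (t \in A); case: (t \in B). Qed.

Lemma symdiffK R : involutive (fun A => symdiff A R).
Proof. by move=> A; apply/setP => t; rewrite !in_symdiff -addbA addbb addbF. Qed.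

Lemma symdiff_shift A B R : symdiff (symdiff A R) (symdiff B R) = symdiff A B.
Proof. by apply/setP => t; rewrite !in_symdiff addbACA addbb addbF. Qed.

Lemma mem_imset_perm (p : {perm T}) A t : (t \in p @: A) = ((p^-1)%g t \in A).
Proof. by rewrite -{1}(permKV p t) mem_imset //; exact: perm_inj. Qed.

Lemma imset_symdiff (p : {perm T}) A B :
  p @: symdiff A B = symdiff (p @: A) (p @: B).
Proof. by apply/setP => t; rewrite !(in_symdiff, mem_imset_perm). Qed.

Definition flip A x := symdiff A [set x].

Lemma in_flip A x t : (t \in flip A x) = (t \in A) (+) (t == x).
Proof. by rewrite in_symdiff inE. Qed.

Lemma flipK A x : flip (flip A x) x = A.
Proof. exact: symdiffK. Qed.

Lemma flipC A x y : flip (flip A x) y = flip (flip A y) x.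
Proof. by apply/setP => t; rewrite !in_flip addbAC. Qed.

Lemma flip_inj A : injective (flip A).
Proof.
move=> x y /setP /(_ x); rewrite !in_flip eqxx.
by case: (x \in A); case: eqP.
Qed.

Lemma flip_symdiff A R x : flip (symdiff A R) x = symdiff (flip A x) R.
Proof. by apply/setP => t; rewrite !(in_flip, in_symdiff) addbAC. Qed.

Lemma imset_flip (p : {perm T}) A x : p @: flip A x = flip (p @: A) (p x).
Proof. by rewrite imset_symdiff imset_set1. Qed.

Lemma flip_setT x : flip setT x = [set~ x].
Proof. by apply/setP => t; rewrite in_flip !inE. Qed.

Lemma flip_proper A x : x \notin A -> A \proper flip A x.
Proof.
move=> xA; apply/properP; split; last by exists x; rewrite // in_flip eqxx (negbTE xA).
by apply/subsetP => t tA; rewrite in_flip tA; apply: contraNneq xA => <-.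
Qed.

Lemma flip_subset A x : x \notin A -> A \subset flip A x.
Proof. by move/flip_proper/proper_sub. Qed.

Lemma flip2_eq_cross A a b c d :
  flip (flip A a) c = flip (flip A b) d -> a != b -> a != c -> d = a.
Proof.
move=> /setP /(_ a) + /negbTE ab /negbTE ac; rewrite !in_flip eqxx ab ac.
by case: (a \in A); case: eqP.
Qed.

Lemma cards_symdiff1P A B :
  reflect (exists x, B = flip A x) (#|symdiff A B| == 1).
Proof.
apply: (iffP cards1P) => [[x /setP AB] | [x ->]]; exists x; apply/setP => t.
  move: (AB t); rewrite in_flip in_symdiff inE.
  by case: (t \in A); case: (t \in B); case: (t == x).
by rewrite in_symdiff in_flip inE addbA addbb.
Qed.

Lemma superset_ind (P : {set T} -> Prop) :
  P setT -> (forall S j, j \notin S -> P (flip S j) -> P S) -> forall S, P S.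
Proof.
move=> PT Pflip S; have [n] := ubnP #|~: S|; elim: n S => // n IHn S.
rewrite ltnS => leSn; have [/(congr1 (@setC T))|[j]] := set_0Vmem (~: S).
  by rewrite setCK setC0 => ->.
rewrite inE => jS; apply: (Pflip S j jS); apply: IHn.
by apply: leq_trans (proper_card _) leSn; rewrite properC flip_proper.
Qed.

End SymmetricDifference.

Section UpwardClosedFamily.
Variables (T : finType) (F : pred {set T}).
Implicit Types (A B R S m : {set T}).

Lemma exists_sub_perm (g : {set T} -> {set T}) :
    injective g -> (forall S, F S -> F (g S)) ->
  exists p : {perm {S | F S}}, forall s, val (p s) = g (val s).
Proof.
move=> g_inj gF; pose h (s : {S | F S}) : {S | F S} := Sub _ (gF _ (valP s)).
have h_inj : injective h by move=> s1 s2 /(congr1 val) /g_inj /val_inj.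
by exists (perm h_inj) => s; rewrite permE.
Qed.

Lemma minset_imset (p : {perm T}) :
  (forall S, F (p @: S) = F S) -> forall m, minset F m -> minset F (p @: m).
Proof.
move=> Fp m /minsetP [Fm m_min].
apply/minsetP; split=> [|B FB sBm]; first by rewrite Fp.
set C := (p^-1)%g @: B.
have BE : B = p @: C.
  by apply/setP => t; rewrite mem_imset_perm mem_imset //; exact: perm_inj.
have FC : F C by rewrite -Fp -BE.
suff sCm : C \subset m by rewrite BE (m_min C FC sCm).
apply/subsetP => t tC.
have : p t \in p @: m by apply: (subsetP sBm); rewrite BE imset_f.
by rewrite mem_imset //; exact: perm_inj.
Qed.

Hypothesis F_up : forall A B, A \subset B -> F A -> F B.

Lemma F_symdiff R S :
  (forall m, minset F m -> [disjoint m & R]) -> F S -> F (symdiff S R).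
Proof.
move=> R_irr FS; have [m m_min mS] := minset_exists FS.
apply: F_up (minsetp m_min); apply/subsetP => t tm.
by rewrite in_symdiff (subsetP mS _ tm) (disjointFr (R_irr m m_min) tm).
Qed.

Lemma F_imset (p : {perm T}) S :
  (forall m, minset F m -> minset F (p @: m)) -> F S -> F (p @: S).
Proof.
move=> p_min FS; have [m m_min mS] := minset_exists FS.
by apply: F_up (minsetp (p_min m m_min)); apply: imsetS.
Qed.

End UpwardClosedFamily.

Section FlipGraphAutomorphism.
Variables (T : finType) (F : pred {set T}).
Implicit Types (A B S m : {set T}) (x y : T).
Hypothesis F_up : forall A B, A \subset B -> F A -> F B.
Hypothesis F_setT : F setT.
Hypothesis F_setC1 : forall x, F [set~ x].
Variable phi : {perm {S | F S}}.
Hypothesis phi_adj : forall s1 s2 : {S | F S},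
  #|symdiff (val s1) (val s2)| == 1 -> #|symdiff (val (phi s1)) (val (phi s2))| == 1.

Definition phi_ext S := oapp (fun s => val (phi s)) S (insub S).

Lemma phi_ext_val s : phi_ext (val s) = val (phi s).
Proof. by rewrite /phi_ext valK. Qed.

Lemma phi_ext_sub A (FA : F A) : phi_ext A = val (phi (Sub A FA)).
Proof. by rewrite -phi_ext_val. Qed.

Lemma phi_ext_F S : F S -> F (phi_ext S).
Proof. by move=> FS; rewrite (phi_ext_sub FS); exact: valP. Qed.

Lemma phi_ext_inj A B : F A -> F B -> phi_ext A = phi_ext B -> A = B.
Proof.
by move=> FA FB; rewrite (phi_ext_sub FA) (phi_ext_sub FB) => /val_inj /perm_inj [].
Qed.

Lemma phi_ext_onto B : F B -> exists2 S, F S & phi_ext S = B.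
Proof.
move=> FB; exists (val ((phi^-1)%g (Sub B FB))); first exact: valP.
by rewrite phi_ext_val permKV.
Qed.

Lemma phi_ext_adj A x : F A -> F (flip A x) ->
  exists y, phi_ext (flip A x) = flip (phi_ext A) y.
Proof.
move=> FA FAx; apply/cards_symdiff1P.
rewrite (phi_ext_sub FA) (phi_ext_sub FAx); apply: phi_adj.
by apply/cards_symdiff1P; exists x.
Qed.

(* The label of the edge {A, A + x}; the default x is junk off the edges. *)
Definition lab A x := odflt x [pick y | phi_ext (flip A x) == flip (phi_ext A) y].

Lemma labP A x : F A -> F (flip A x) ->
  phi_ext (flip A x) = flip (phi_ext A) (lab A x).
Proof.
move=> FA FAx; rewrite /lab; case: pickP => [y /eqP // | no_y].
by have [y Ey] := phi_ext_adj FA FAx; move: (no_y y); rewrite Ey eqxx.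
Qed.

Lemma lab_flip A x : F A -> F (flip A x) -> lab (flip A x) x = lab A x.
Proof.
move=> FA FAx; have FAxx : F (flip (flip A x) x) by rewrite flipK.
have := labP FAx FAxx; rewrite flipK (labP FA FAx) => /esym.
by rewrite -{2}(flipK (phi_ext A) (lab A x)) => /flip_inj.
Qed.

Lemma lab_square A x j : x != j -> F A -> F (flip A x) -> F (flip A j) ->
  F (flip (flip A x) j) -> lab (flip A j) x = lab A x.
Proof.
move=> xj FA FAx FAj FAxj; have FAjx : F (flip (flip A j) x) by rewrite flipC.
have := labP FAj FAjx; rewrite flipC (labP FAx FAxj) (labP FA FAx) (labP FA FAj).
move=> square; apply: (flip2_eq_cross square).
  apply: contra_neq xj => ab; apply: (@flip_inj _ A); apply: phi_ext_inj => //.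
  by rewrite (labP FA FAx) (labP FA FAj) ab.
apply: contra_neq xj => ac; apply: (@flip_inj _ (flip A x)); rewrite flipK.
by apply: phi_ext_inj => //; rewrite (labP FAx FAxj) (labP FA FAx) ac flipK.
Qed.

Lemma lab_setT S x : F S -> F (flip S x) -> lab S x = lab setT x.
Proof.
wlog xS : S / x \in S.
  move=> gen FS FSx; have [xS|xS] := boolP (x \in S); first exact: gen xS FS FSx.
  by rewrite -(lab_flip FS FSx) gen ?flipK // in_flip eqxx (negbTE xS).
elim/superset_ind: S xS => [// | S j jS IH xS FS FSx].
have xj : x != j by apply: contraNneq jS => <-.
have FSj : F (flip S j) by apply: F_up FS; exact: flip_subset.
have FSxj : F (flip (flip S x) j).
  apply: F_up FSx; apply: flip_subset.
  by rewrite in_flip (negbTE jS) eq_sym (negbTE xj).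
rewrite -(lab_square xj FS FSx FSj FSxj); apply: IH => //; last by rewrite flipC.
by rewrite in_flip xS (negbTE xj).
Qed.

Lemma lab_setT_inj : injective (lab setT).
Proof.
have F_flipT z : F (flip setT z) by rewrite flip_setT.
move=> x y lab_xy; apply: (@flip_inj _ setT); apply: phi_ext_inj => //.
by rewrite !labP // lab_xy.
Qed.

Definition phi_perm : {perm T} := perm lab_setT_inj.

Definition phi_shift := ~: phi_ext setT.

Lemma phi_ext_flip S x : F S -> F (flip S x) ->
  phi_ext (flip S x) = flip (phi_ext S) (phi_perm x).
Proof. by move=> FS FSx; rewrite permE -(lab_setT FS FSx) labP. Qed.

Lemma phi_ext_perm_shift S : F S -> phi_ext S = symdiff (phi_perm @: S) phi_shift.
Proof.
elim/superset_ind: S => [_ | S j jS IH FS].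
  apply/setP => t; rewrite in_symdiff mem_imset_perm !inE.
  by case: (t \in phi_ext setT).
have FSj : F (flip S j) by apply: F_up FS; exact: flip_subset.
have FSjj : F (flip (flip S j) j) by rewrite flipK.
have -> : phi_ext S = phi_ext (flip (flip S j) j) by rewrite flipK.
by rewrite (phi_ext_flip FSj FSjj) IH // imset_flip flip_symdiff flipK.
Qed.

Lemma phi_shift_irrelevant m : minset F m -> [disjoint m & phi_shift].
Proof.
move=> m_min; have [S FS phiS] := phi_ext_onto (minsetp m_min).
apply/pred0P => x /=; apply/andP => -[xm xR].
have xS : (phi_perm^-1)%g x \notin S.
  apply: contraTN xm => xS.
  by rewrite -phiS phi_ext_perm_shift // in_symdiff mem_imset_perm xS xR.
have FSx : F (flip S ((phi_perm^-1)%g x)) by apply: F_up FS; exact: flip_subset.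
have Fmx : F (flip m x).
  by rewrite -phiS -(permKV phi_perm x) -phi_ext_flip //; exact: phi_ext_F.
have mx_proper : flip m x \proper m.
  by rewrite -{2}(flipK m x) flip_proper // in_flip xm eqxx.
by move: (mx_proper); rewrite (minsetinf m_min Fmx (proper_sub mx_proper)) properxx.
Qed.

Lemma F_imset_phi_perm S : F (phi_perm @: S) = F S.
Proof.
apply/idP/idP => [FpS | FS].
  have [S1 FS1] := phi_ext_onto (F_symdiff F_up phi_shift_irrelevant FpS).
  rewrite phi_ext_perm_shift // => /(inv_inj (symdiffK phi_shift)).
  by move=> /(imset_inj perm_inj) <-.
rewrite -[phi_perm @: S](symdiffK phi_shift) -phi_ext_perm_shift //.
exact: (F_symdiff F_up phi_shift_irrelevant (phi_ext_F FS)).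
Qed.

Lemma TAR_aut_decomposition : exists (pi : {perm T}) (R : {set T}),
  [/\ forall m, minset F m -> [disjoint m & R],
      forall m, minset F m -> minset F (pi @: m)
    & forall s, val (phi s) = symdiff (pi @: val s) R].
Proof.
exists phi_perm, phi_shift; split.
- exact: phi_shift_irrelevant.
- exact: minset_imset F_imset_phi_perm.
- by move=> s; rewrite -phi_ext_val phi_ext_perm_shift //; exact: valP.
Qed.

End FlipGraphAutomorphism.

Section TARGraph.
Variables (X : Xfamily) (T : finType) (e : rel T).
Arguments X : clear implicits.
Implicit Types (R m : {set T}) (psi : {perm T}) (p : {perm Xsets X T e}).

Lemma X_irrelevantP R :
  reflect (forall m, minset (X T e) m -> [disjoint m & R]) (X_irrelevant X e R).
Proof.
apply: (iffP forall_inP) => [irr m m_min | irr v vR].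
  apply/pred0P => v /=; apply/andP => -[vm vR].
  by have /forallP /(_ m) := irr v vR; rewrite /minimal_Xset m_min vm.
by apply/forallP => m; apply/implyP => m_min; rewrite (disjointFl (irr m m_min) vR).
Qed.

Lemma M_XP psi :
  reflect (forall m, minset (X T e) m -> minset (X T e) (psi @: m)) (M_X X e psi).
Proof.
apply: (iffP forallP) => [psi_min m m_min | psi_min m].
  by have /implyP /(_ m_min) /andP [] := psi_min m.
apply/implyP => m_min; rewrite /minimal_Xset psi_min // card_imset ?eqxx //.
exact: perm_inj.
Qed.

Lemma acts_as_nuP R p :
  reflect (forall s, val (p s) = symdiff (val s) R) (acts_as_nu R p).
Proof. by apply: (iffP forallP) => pE s; apply/eqP. Qed.

Lemma acts_as_psiP psi p :
  reflect (forall s, val (p s) = psi @: val s) (acts_as_psi psi p).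
Proof. by apply: (iffP forallP) => pE s; apply/eqP. Qed.

Lemma TAR_AutP p :
  reflect (forall s1 s2, TAR_adj (p s1) (p s2) = TAR_adj s1 s2) (p \in TAR_Aut X e).
Proof.
rewrite inE; apply: (iffP forallP) => [p_adj s1 s2 | p_adj s1].
  by have /forallP /(_ s2) /eqP := p_adj s1.
by apply/forallP => s2; rewrite p_adj.
Qed.

Lemma TAR_Aut_group : group_set (TAR_Aut X e).
Proof.
apply/group_setP; split; first by apply/TAR_AutP => s1 s2; rewrite !perm1.
move=> p q /TAR_AutP p_adj /TAR_AutP q_adj; apply/TAR_AutP => s1 s2.
by rewrite !permM q_adj p_adj.
Qed.

Lemma TAR_gens_sub : TAR_gens X e \subset TAR_Aut X e.
Proof.
apply/subsetP => p; rewrite inE.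
case/orP => [/existsP [R /andP [_ /acts_as_nuP pE]]
            | /existsP [psi /andP [_ /acts_as_psiP pE]]];
  apply/TAR_AutP => s1 s2; rewrite /TAR_adj !pE.
  by rewrite symdiff_shift.
by rewrite -imset_symdiff card_imset //; exact: perm_inj.
Qed.

Lemma gen_TAR_gens_sub : (<<TAR_gens X e>> \subset TAR_Aut X e)%g.
Proof.
by rewrite -[TAR_Aut X e]/(gval (Group TAR_Aut_group)) gen_subG TAR_gens_sub.
Qed.

Hypothesis X_up : forall A B : {set T}, A \subset B -> X T e A -> X T e B.

Lemma exists_nu R : X_irrelevant X e R -> exists p, acts_as_nu R p.
Proof.
move=> /X_irrelevantP R_irr.
have [p pE] := @exists_sub_perm _ (X T e) _ (inv_inj (symdiffK R))
  (fun S => F_symdiff X_up R_irr).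
by exists p; apply/acts_as_nuP.
Qed.

Lemma exists_psi psi : M_X X e psi -> exists p, acts_as_psi psi p.
Proof.
move=> /M_XP psi_min.
have [p pE] := @exists_sub_perm _ (X T e) _ (imset_inj (@perm_inj _ psi))
  (fun S => F_imset X_up psi_min).
by exists p; apply/acts_as_psiP.
Qed.

Lemma TAR_Aut_sub_gen : X T e setT -> (forall x, X T e [set~ x]) ->
  (TAR_Aut X e \subset <<TAR_gens X e>>)%g.
Proof.
move=> X_setT X_setC1; apply/subsetP => phi /TAR_AutP phi_adj.
have phi_edge s1 s2 : TAR_adj s1 s2 -> TAR_adj (phi s1) (phi s2) by rewrite phi_adj.
have [pi [R [/X_irrelevantP R_irr /M_XP pi_min phiE]]] :=
  TAR_aut_decomposition X_up X_setT X_setC1 phi_edge.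
have [p1 p1E] := exists_psi pi_min; have [p2 p2E] := exists_nu R_irr.
have -> : phi = (p1 * p2)%g.
  apply/permP => s; apply: val_inj.
  by rewrite permM (acts_as_nuP _ _ p2E) (acts_as_psiP _ _ p1E) phiE.
rewrite groupM ?mem_gen // inE; apply/orP; [right | left]; apply/existsP.
  by exists pi; rewrite pi_min.
by exists R; rewrite R_irr.
Qed.

End TARGraph.

Theorem theorem2p18 (X : Xfamily) (T : finType) (e : rel T) :
  Xset_parameter X -> simple_graph e -> no_isolated e ->
  (forall R : {set T}, X_irrelevant X e R ->
     exists p : {perm Xsets X T e}, acts_as_nu R p) /\
  (forall psi : {perm T}, M_X X e psi ->
     exists p : {perm Xsets X T e}, acts_as_psi psi p) /\
  TAR_Aut X e = <<TAR_gens X e>>%g.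
Proof.
(* Only the upward closure (1) and axiom (4) are needed. *)
move=> [_ [X_up [_ [_ X_large]]]] G no_iso; have X_upG := X_up T e G.
have X_setC1 x : X T e [set~ x] by apply: X_large; rewrite // cardsC1 subn1.
have X_setT : X T e setT.
  by have [x _] := card_gt0P G.1; apply: X_upG (X_setC1 x); exact: subsetT.
split; [exact: exists_nu | split; first exact: exists_psi].
by apply/eqP; rewrite eqEsubset TAR_Aut_sub_gen // gen_TAR_gens_sub.
Qed.
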